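(* For any $w\in\{a,\beta\}^*$ such that $\varphi_w$ is primitive, the set $C(w)\cup C(H(w))$ is closed under derivation, where $C(x) = \{\varphi_v : v = \mathrm{cyc}^k(x),\ k\in\mathbb{N}\}$.
   Context: Morphisms on $\{0,1\}^*$: $\varphi_a: 0\mapsto 0, 1 \mapsto 10$; $\varphi_b: 0 \mapsto 0, 1\mapsto 01$; $\varphi_\alpha: 0\mapsto 01, 1\mapsto 1$; $\varphi_\beta: 0\mapsto 10, 1 \mapsto 1$; for $w=w_0\cdots w_{m-1}$, $\varphi_w = \varphi_{w_0}\circ\cdots\circ\varphi_{w_{m-1}}$. $\mathrm{cyc}(u_0u_1\cdots u_{n-1}) = u_1\cdots u_{n-1}u_0$. $H$ is the monoid morphism on $\{a,b,\alpha,\beta\}^*$ with $H(a)=H(b)=b$, $H(\alpha)=\alpha$, $H(\beta)=\beta$. A morphism is primitive if some power maps every letter to a word containing every letter; a substitution is a morphism $\psi$ with a letter $c$, $\psi(c)=cx$, $x$ nonempty, $|\psi^n(c)|\to\infty$. Derived word: for a uniformly recurrent word $\mathbf{u}$ and factor $v$, a return word of $v$ is a factor $r$ such that $rv$ is a factor in which $v$ occurs exactly twice (as prefix and suffix); with $r_0,\dots,r_k$ all return words and $\mathbf{u}=p\,r_{s_0}r_{s_1}\cdots$, $|p|$ the first occurrence of $v$, $\mathbf{d}_{\mathbf{u}}(v)=s_0s_1\cdots$, up to permutation of letters. A finite set $M$ of primitive substitutions is closed under derivation if for every $\varphi\in M$, every fixed point $\mathbf{u}$ of $\varphi$ and every factor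 $v$ of $\mathbf{u}$, $\mathbf{d}_{\mathbf{u}}(v)$ is fixed by some $\psi\in M$. *)

From mathcomp Require Import all_boot.
Set Implicit Arguments. Unset Strict Implicit. Unset Printing Implicit Defensive.

Inductive sym := Sa | Sb | Salpha | Sbeta.

(* The binary alphabet {0,1} is bool, with 0 = false and 1 = true. *)
Definition morph := bool -> seq bool.

Definition mapw (f : morph) (s : seq bool) : seq bool := flatten (map f s).

Definition phi_letter (x : sym) : morph :=
  match x with
  | Sa     => fun c => if c then [:: true; false] else [:: false]
  | Sb     => fun c => if c then [:: false; true] else [:: false]
  | Salpha => fun c => if c then [:: true] else [:: false; true]
  | Sbeta  => fun c => if c then [:: true] else [:: true; false]
  end.

Definition phi (w : seq sym) : morph :=
  fun c => foldr (fun x acc => mapw (phi_letter x) acc) [:: c] w.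

Definition cyc {T : Type} (s : seq T) : seq T := rot 1 s.

Definition Hsym (x : sym) : sym :=
  match x with Sa | Sb => Sb | y => y end.
Definition H (w : seq sym) : seq sym := map Hsym w.

Definition is_a_or_beta (x : sym) : bool :=
  match x with Sa | Sbeta => true | _ => false end.

(* C(x) = { phi_v : v = cyc^k(x), k in N }, represented by its index words v. *)
Definition Cset (x : seq sym) (v : seq sym) : Prop := exists k : nat, v = iter k cyc x.

Definition mpow (f : morph) (n : nat) : morph :=
  iter n (fun g c => mapw f (g c)) (fun c => [:: c]).

Definition primitive (f : morph) : Prop :=
  exists n : nat, forall c d : bool, d \in mpow f n c.

Definition substitution (f : morph) : Prop :=
  exists (c : bool) (x : seq bool),
    [/\ f c = c :: x, x != [::] &
        forall N : nat, exists n0 : nat, forall n, n0 <= n -> N <= size (mpow f n c)].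

Definition pref (u : nat -> bool) (n : nat) : seq bool := mkseq u n.

(* u is a fixed point of f : f(u) (the infinite concatenation f(u_0) f(u_1) ...)
   is infinite and equals u. *)
Definition fixed_by (f : morph) (u : nat -> bool) : Prop :=
  (forall n i, i < size (mapw f (pref u n)) -> nth false (mapw f (pref u n)) i = u i)
  /\ (forall N : nat, exists n : nat, N <= size (mapw f (pref u n))).

Definition occurs (u : nat -> bool) (v : seq bool) (i : nat) : Prop :=
  forall j, j < size v -> u (i + j) = nth false v j.

Definition factor (u : nat -> bool) (v : seq bool) : Prop := exists i, occurs u v i.

Definition occ_enum (u : nat -> bool) (v : seq bool) (pos : nat -> nat) : Prop :=
  [/\ forall n, occurs u v (pos n),
      forall n, pos n < pos n.+1 &
      forall i, occurs u v i -> exists n, pos n = i].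

Definition retw (u : nat -> bool) (pos : nat -> nat) (n : nat) : seq bool :=
  [seq u k | k <- iota (pos n) (pos n.+1 - pos n)].

(* The derived word d_u(v), up to a (injective) renaming of its letters (the
   return words) into {0,1}, is a fixed point of f. *)
Definition derived_fixed_by (u : nat -> bool) (v : seq bool) (f : morph) : Prop :=
  exists pos : nat -> nat, occ_enum u v pos /\
  exists lab : seq bool -> bool,
    (forall m n, lab (retw u pos m) = lab (retw u pos n) -> retw u pos m = retw u pos n)
    /\ fixed_by f (fun n => lab (retw u pos n)).

Definition closed_under_derivation (M : seq sym -> Prop) : Prop :=
  (forall v, M v -> primitive (phi v) /\ substitution (phi v)) /\
  (forall v, M v -> forall u, fixed_by (phi v) u ->
     forall x, factor u x -> exists v', M v' /\ derived_fixed_by u x (phi v')).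

(* Every word [v] of C(w) or C(H(w)) contains beta, contains a or b but not
   both, and no alpha; hence every [phi v d] contains both letters and the
   first letter of [phi v c] can be chosen equal to [c], so [phi v] is a
   primitive substitution.
   For derivation write [v = c v'] with [c] among a, b, beta: a fixed point [u]
   of [phi v] is [phi_c(u')] for a fixed point [u'] of [phi (cyc v)], again in
   the family.  These elementary morphisms are recognizable, so the occurrences
   of a factor [x] of [u], possibly extended by a forced letter, are exactly the
   images of the occurrences of a factor [y] of [u'], and the return words
   correspond under the injective map [mapw phi_c]: d_u(x) = d_u'(y).  Here
   |y| < |x|, except for one-letter factors, which are kept until the first
   letter of [v] that erases them.  Descending to the empty factor, whose
   derived word is the fixed point itself, yields a member of the family fixing
   d_u(x).  The one non-recognizable case, [phi_a] and a factor starting with 0,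
   is handled by the conjugacy 0 phi_a(s) = phi_b(s) 0, which turns [u] without
   its first letter into a fixed point of [phi (H v)]. *)

From mathcomp Require Import all_boot zify.
From Stdlib Require Import FunctionalExtensionality ClassicalEpsilon.
Set Implicit Arguments. Unset Strict Implicit. Unset Printing Implicit Defensive.

(** * Factors and images of infinite words *)

Definition window (u : nat -> bool) (i n : nat) : seq bool := [seq u k | k <- iota i n].

Lemma size_window u i n : size (window u i n) = n.
Proof. by rewrite size_map size_iota. Qed.

Lemma nth_window u i n k : k < n -> nth false (window u i n) k = u (i + k).
Proof. by move=> kn; rewrite (nth_map 0) ?size_iota // nth_iota. Qed.

Lemma windowD u i a b : window u i (a + b) = window u i a ++ window u (i + a) b.
Proof. by rewrite /window iotaD map_cat. Qed.

Lemma prefD u a b : pref u (a + b) = pref u a ++ window u a b.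
Proof. exact: windowD. Qed.

Lemma take_window u i n L : take L (window u i n) = window u i (minn L n).
Proof. by rewrite /window -map_take take_iota. Qed.

Definition shift (u : nat -> bool) : nat -> bool := fun n => u n.+1.

Lemma window_shift u i n : window u i.+1 n = window (shift u) i n.
Proof.
by rewrite /window -addn1 addnC iotaDl -map_comp; apply: eq_map => j /=; rewrite add1n.
Qed.

Lemma prefS u n : pref u n.+1 = u 0 :: pref (shift u) n.
Proof. by rewrite -add1n prefD window_shift. Qed.

Lemma occurs_window u x i : occurs u x i <-> window u i (size x) = x.
Proof.
split=> [ox|wx j jx]; last by rewrite -(nth_window u i jx) wx.
apply: (@eq_from_nth _ false); first by rewrite size_window.
by move=> k; rewrite size_window => kx; rewrite nth_window // ox.
Qed.

Lemma occurs_cons u c x i : occurs u (c :: x) i <-> u i = c /\ occurs u x i.+1.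
Proof.
split=> [ox|[ui ox] [|j] jx /=].
- split; first by have := ox 0 erefl; rewrite addn0.
  by move=> j jx; have := ox j.+1 jx; rewrite addnS.
- by rewrite addn0.
- by rewrite addnS ox.
Qed.

Lemma occurs_rcons u x e i : occurs u (rcons x e) i <-> occurs u x i /\ u (i + size x) = e.
Proof.
split=> [ox|[ox ue] j].
- split; last by have := ox (size x); rewrite size_rcons nth_rcons ltnn eqxx => ->.
  by move=> j jx; have := ox j; rewrite size_rcons nth_rcons jx => ->; lia.
- rewrite size_rcons ltnS leq_eqVlt nth_rcons => /orP[/eqP->|jx].
  + by rewrite ltnn eqxx.
  + by rewrite jx ox.
Qed.

Lemma occurs_head u b x i : occurs u (b :: x) i -> u i = b.
Proof. by case/occurs_cons. Qed.

Lemma occurs_last u b x i : occurs u (b :: x) i -> u (i + size x) = last b x.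
Proof. by rewrite lastI => /occurs_rcons[]; rewrite size_belast. Qed.

Lemma mapw_cat f s1 s2 : mapw f (s1 ++ s2) = mapw f s1 ++ mapw f s2.
Proof. by rewrite /mapw map_cat flatten_cat. Qed.

Lemma mapw_cons f c s : mapw f (c :: s) = f c ++ mapw f s.
Proof. by []. Qed.

Lemma mapw1 f c : mapw f [:: c] = f c.
Proof. by rewrite mapw_cons cats0. Qed.

Lemma mapw_comp f g s : mapw f (mapw g s) = mapw (fun c => mapw f (g c)) s.
Proof. by elim: s => //= c s IH; rewrite !mapw_cons mapw_cat IH. Qed.

Lemma eq_mapw f g s : f =1 g -> mapw f s = mapw g s.
Proof. by move=> fg; rewrite /mapw (eq_map fg). Qed.

Definition nonerasing (f : morph) := forall c, 0 < size (f c).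

Lemma leq_size_mapw f s : nonerasing f -> size s <= size (mapw f s).
Proof.
move=> ne; elim: s => //= c s IH; rewrite mapw_cons size_cat.
by have := ne c; lia.
Qed.

Definition is_image (f : morph) (u' u : nat -> bool) :=
  forall n, mapw f (pref u' n) = pref u (size (mapw f (pref u' n))).

Definition is_fixed (f : morph) (u : nat -> bool) := is_image f u u.

Definition cut (f : morph) (u' : nat -> bool) (j : nat) := size (mapw f (pref u' j)).

Section Image.
Variables (f : morph) (u' u : nat -> bool).
Hypothesis ne : nonerasing f.
Hypothesis img : is_image f u' u.
Local Notation cut := (cut f u').

Lemma cut0 : cut 0 = 0.
Proof. by []. Qed.

Lemma cutS j : cut j.+1 = cut j + size (f (u' j)).
Proof. by rewrite /cut -addn1 prefD mapw_cat mapw1 size_cat. Qed.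

Lemma cutD j n : cut (j + n) = cut j + size (mapw f (window u' j n)).
Proof. by rewrite /cut prefD mapw_cat size_cat. Qed.

Lemma ltn_cut j k : j < k -> cut j < cut k.
Proof.
elim: k => // k IH; rewrite ltnS leq_eqVlt => /orP[/eqP->|/IH jk];
  rewrite cutS; have := ne (u' k); lia.
Qed.

Lemma leq_cut j k : (cut j <= cut k) = (j <= k).
Proof.
apply/idP/idP.
- by move=> h; rewrite leqNgt; apply/negP => /ltn_cut; lia.
- by rewrite leq_eqVlt => /orP[/eqP->//|/ltn_cut]; lia.
Qed.

Lemma window_cut j n :
  window u (cut j) (size (mapw f (window u' j n))) = mapw f (window u' j n).
Proof.
have := img (j + n); rewrite prefD mapw_cat size_cat (img j) -/(cut j) prefD.
by move=> /eqP; rewrite eqseq_cat ?size_mkseq // => /andP[_ /eqP].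
Qed.

Lemma window_cut_take j n : window u (cut j) n = take n (mapw f (window u' j n)).
Proof.
rewrite -window_cut take_window; congr window.
by have := leq_size_mapw (window u' j n) ne; rewrite size_window; lia.
Qed.

Lemma window_between_cuts j k :
  j <= k -> window u (cut j) (cut k - cut j) = mapw f (window u' j (k - j)).
Proof.
by move=> jk; rewrite -(window_cut j (k - j)); congr window; rewrite -{1}(subnKC jk) cutD; lia.
Qed.

Lemma occurs_image y j : occurs u' y j -> occurs u (mapw f y) (cut j).
Proof.
by move=> /occurs_window oy; apply/occurs_window; have := window_cut j (size y); rewrite oy.
Qed.

Lemma cut_occurs y j : occurs u' y j -> cut (j + size y) = cut j + size (mapw f y).
Proof. by move=> /occurs_window oy; rewrite cutD oy. Qed.

Lemma exists_block i : exists j, cut j <= i < cut j.+1.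
Proof.
elim: i => [|i [j /andP[h1 h2]]].
- by exists 0; rewrite cutS cut0; have := ne (u' 0); lia.
- case: (ltnP i.+1 (cut j.+1)) => h3; first by exists j; apply/andP; split => //; lia.
  by exists j.+1; rewrite (cutS j.+1); have := ne (u' j.+1); lia.
Qed.

Lemma nth_block j i : cut j <= i < cut j.+1 -> u i = nth false (f (u' j)) (i - cut j).
Proof.
move=> /andP[h1 h2]; have := window_cut j 1; rewrite /window /= mapw1 => <-.
by rewrite nth_window; [congr u | move: h2; rewrite cutS]; lia.
Qed.

Lemma u_cut j : u (cut j) = head false (f (u' j)).
Proof. by rewrite (@nth_block j) ?subnn ?nth0 // leqnn cutS /=; have := ne (u' j); lia. Qed.

Lemma cut_of_start m : (forall c k, k < size (f c) -> nth false (f c) k = m -> k = 0) ->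
  forall i, u i = m -> exists j, cut j = i.
Proof.
move=> hm i ui; have [j hj] := exists_block i; exists j.
have := nth_block hj; rewrite ui => /esym/hm.
by move: hj; rewrite cutS => hj /(_ ltac:(lia)); lia.
Qed.

Lemma cut_of_end e :
  (forall c k, k < size (f c) -> nth false (f c) k = e -> k = (size (f c)).-1) ->
  forall i, u i = e -> exists j, cut j.+1 = i.+1.
Proof.
move=> he i ui; have [j hj] := exists_block i; exists j.
have := nth_block hj; rewrite ui => /esym/he.
by move: hj; rewrite cutS => hj /(_ ltac:(lia)); have := ne (u' j); lia.
Qed.

Lemma parse_between_cuts x j k : occurs u x (cut j) -> cut k = cut j + size x ->
  x = mapw f (window u' j (k - j)).
Proof.
move=> /occurs_window ox hk.
have jk : j <= k by rewrite -leq_cut hk; lia.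
by have := window_between_cuts jk; rewrite hk addKn ox.
Qed.

Lemma occurs_preimage x y j : occurs u x (cut j) ->
  (forall z, prefix x (mapw f z) -> prefix y z) -> size y <= size x -> occurs u' y j.
Proof.
move=> /occurs_window ox dec yx; apply/occurs_window.
have : prefix x (mapw f (window u' j (size x))) by rewrite prefixE -window_cut_take ox.
move=> /dec; rewrite prefixE take_window => /eqP {2}<-.
by congr window; symmetry; apply/minn_idPl.
Qed.

End Image.

(** * Transfer of derived words *)

Definition reduces_to (u : nat -> bool) (x : seq bool) (u' : nat -> bool) (y : seq bool) :=
  forall g, derived_fixed_by u' y g -> derived_fixed_by u x g.

Lemma retwE u pos n : retw u pos n = window u (pos n) (pos n.+1 - pos n).
Proof. by []. Qed.

Lemma reduces_to_trans u x u' y u'' z :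
  reduces_to u x u' y -> reduces_to u' y u'' z -> reduces_to u x u'' z.
Proof. by move=> r1 r2 g /r2 /r1. Qed.

Lemma injective_left_inverse (F : seq bool -> seq bool) : injective F -> exists G, cancel F G.
Proof.
move=> injF; exists (fun s => epsilon (inhabits [::]) (fun t => F t = s)) => t; apply: injF.
exact: (epsilon_spec (inhabits [::]) (fun t' => F t' = F t) (ex_intro _ t erefl)).
Qed.

Lemma reduces_by_enum u x u' y (F : seq bool -> seq bool) (h : nat -> nat) : injective F ->
  (forall pos', occ_enum u' y pos' ->
     occ_enum u x (h \o pos') /\ forall n, retw u (h \o pos') n = F (retw u' pos' n)) ->
  reduces_to u x u' y.
Proof.
move=> injF hpos g [pos' [oe' [lab [hlab hfix]]]]; have [oe hretw] := hpos _ oe'.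
have [G FK] := injective_left_inverse injF.
exists (h \o pos'); split => //; exists (fun s => lab (G s)); split.
- by move=> m n; rewrite !hretw !FK => /hlab ->.
- suff -> : (fun n => lab (G (retw u (h \o pos') n))) = (fun n => lab (retw u' pos' n)) by [].
  by apply: functional_extensionality => n; rewrite hretw FK.
Qed.

Lemma reduces_image f u' u x y : nonerasing f -> is_image f u' u -> injective (mapw f) ->
  (forall i, occurs u x i <-> exists j, i = cut f u' j /\ occurs u' y j) ->
  reduces_to u x u' y.
Proof.
move=> ne img injf hocc; apply: (@reduces_by_enum _ _ _ _ (mapw f) (cut f u')) => //.
move=> pos' [o1 o2 o3]; split; first split.
- by move=> n; apply/hocc; exists (pos' n).
- by move=> n; apply: ltn_cut.
- by move=> i /hocc [j [-> /o3 [n <-]]]; exists n.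
- by move=> n; rewrite !retwE window_between_cuts // ltnW.
Qed.

Lemma reduces_extend_left u c x : (forall i, occurs u x i -> 0 < i /\ u i.-1 = c) ->
  reduces_to u x u (c :: x).
Proof.
move=> hprev; apply: (@reduces_by_enum _ _ _ _ (rot 1) succn); first exact: rot_inj.
move=> pos' [o1 o2 o3]; split; first split.
- by move=> n; have /occurs_cons[] := o1 n.
- by move=> n; rewrite /= ltnS.
- move=> i oi; have [i0 ui] := hprev i oi.
  have /o3 [n hn] : occurs u (c :: x) i.-1 by apply/occurs_cons; rewrite prednK.
  by exists n; rewrite /= hn prednK.
- move=> n; rewrite !retwE /= subSS.
  have lt_pos := o2 n; set a := pos' n in lt_pos *; set b := pos' n.+1 in lt_pos *.
  have ua : u a = c by have /occurs_cons[] := o1 n.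
  have ub : u b = c by have /occurs_cons[] := o1 n.+1.
  have -> : b - a = (b - a).-1 + 1 by lia.
  rewrite windowD [in RHS]addnC windowD /window /= cats1 rot1_cons addn1 ua -ub.
  by congr (rcons _ (u _)); lia.
Qed.

Lemma reduces_shift u x : ~ occurs u x 0 -> reduces_to u x (shift u) x.
Proof.
move=> nox0; apply: (@reduces_by_enum _ _ _ _ id succn) => // pos' [o1 o2 o3].
have occS i : occurs u x i.+1 <-> occurs (shift u) x i.
  by split=> ox j jx; have := ox j jx; rewrite addSn.
split; first split.
- by move=> n; apply/occS.
- by move=> n; rewrite /= ltnS.
- move=> [|i] // /occS /o3 [n hn]; by exists n; rewrite /= hn.
- by move=> n; rewrite !retwE /= subSS window_shift.
Qed.

Lemma is_fixedP f u : nonerasing f -> is_fixed f u <-> fixed_by f u.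
Proof.
move=> ne; split=> [fix_u|[fix_u _] n].
- split=> [n i|N]; first by rewrite (fix_u n) size_mkseq => lt_i; rewrite nth_mkseq.
  by exists N; have := leq_size_mapw (pref u N) ne; rewrite size_mkseq.
- apply: (@eq_from_nth _ false); first by rewrite size_mkseq.
  by move=> i hi; rewrite fix_u // nth_mkseq.
Qed.

Lemma derived_nil f u : fixed_by f u -> derived_fixed_by u [::] f.
Proof.
move=> fix_u; exists id; split; first by split => // i _; exists i.
have retw1 n : retw u id n = [:: u n] by rewrite retwE subSnn.
exists (head false); split; first by move=> m n; rewrite !retw1 /= => ->.
suff -> : (fun n => head false (retw u id n)) = u by [].
by apply: functional_extensionality => n; rewrite retw1.
Qed.

(** * Recognizability of the elementary morphisms *)

(* [lead true] is [phi_beta] and [lead false] is [phi_b]. *)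
Definition lead (m : bool) : morph := fun c => if c == m then [:: m] else [:: m; ~~ m].

Definition phi_a : morph := phi_letter Sa.

Lemma lead_nonerasing m : nonerasing (lead m).
Proof. by move=> c; rewrite /lead; case: eqP. Qed.

Lemma phi_a_nonerasing : nonerasing phi_a.
Proof. by case. Qed.

Lemma head_lead m c : head false (lead m c) = m.
Proof. by rewrite /lead; case: eqP. Qed.

Lemma size_lead m c : size (lead m c) <= 2.
Proof. by rewrite /lead; case: eqP. Qed.

Lemma lead_start m c k : k < size (lead m c) -> nth false (lead m c) k = m -> k = 0.
Proof. by rewrite /lead; case: eqP => _; case: k => [|[|k]] //=; case: (m). Qed.

Lemma lead_end m c k :
  k < size (lead m c) -> nth false (lead m c) k = ~~ m -> k = (size (lead m c)).-1.
Proof. by rewrite /lead; case: eqP => _; case: k => [|[|k]] //=; case: (m). Qed.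

Lemma phi_a_start c k : k < size (phi_a c) -> nth false (phi_a c) k = true -> k = 0.
Proof. by case: c; case: k => [|[|k]]. Qed.

Lemma phi_a_end c k :
  k < size (phi_a c) -> nth false (phi_a c) k = false -> k = (size (phi_a c)).-1.
Proof. by case: c; case: k => [|[|k]]. Qed.

Lemma mapw_lead_head m z : mapw (lead m) z = [::] \/ exists t, mapw (lead m) z = m :: t.
Proof.
case: z => [|c z]; [left | right] => //.
by rewrite mapw_cons /lead; case: eqP => _; eexists.
Qed.

Lemma size_mapw_lead m y : size (mapw (lead m) y) = size y + count_mem (~~ m) (mapw (lead m) y).
Proof.
elim: y => //= c y IH; rewrite mapw_cons size_cat count_cat IH /lead.
by case: eqP => _ /=; case: (m) => /=; lia.
Qed.

Lemma size_mapw_phi_a y : size (mapw phi_a y) = size y + count_mem true (mapw phi_a y).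
Proof. by elim: y => //= c y IH; rewrite mapw_cons size_cat count_cat IH; case: c => /=; lia. Qed.

Lemma mapw_lead_cat_head m y : exists t, mapw (lead m) y ++ [:: m] = m :: t.
Proof. by case: (mapw_lead_head m y) => [->|[t ->]]; eexists. Qed.

(* The trailing [m] forces the last block of [y] to be complete. *)
Lemma prefix_mapw_lead m y z :
  prefix (mapw (lead m) y ++ [:: m]) (mapw (lead m) z) -> prefix y z.
Proof.
elim: y z => [|c y IH] [|d z] //=; rewrite !mapw_cons -catA.
- by have [t ->] := mapw_lead_cat_head m y; rewrite /lead; case: eqP.
- have [t ht] := mapw_lead_cat_head m y; have hz := mapw_lead_head m z.
  case: c d => [] []; case: m IH ht hz => IH ht hz; rewrite ![lead _ _]/lead /=.
  all: try by move/IH.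
  all: rewrite ht //=.
  all: by case: hz => [->|[? ->]].
Qed.

Lemma prefix_mapw_phi_a y z : prefix (mapw phi_a y) (mapw phi_a z) -> prefix y z.
Proof.
elim: y z => [|c y IH] [|d z] //=; rewrite ?mapw_cons; first by case: c.
by case: c; case: d => //= /IH ->.
Qed.

Lemma mapw_lead_inj m : injective (mapw (lead m)).
Proof.
elim=> [|c y IH] [|d z] //=; rewrite ?mapw_cons.
- by case: (lead m d) (lead_nonerasing m d).
- by case: (lead m c) (lead_nonerasing m c).
- have hy := mapw_lead_head m y; have hz := mapw_lead_head m z.
  case: c d => [] []; case: m IH hy hz => IH hy hz; rewrite ![lead _ _]/lead /=.
  all: try by case => /IH ->.
  all: try by case: hy => [->|[t ->]].
  all: by case: hz => [->|[t ->]].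
Qed.

Lemma mapw_phi_a_inj : injective (mapw phi_a).
Proof.
elim=> [|c y IH] [|d z] //=; rewrite ?mapw_cons; [by case: d | by case: c |].
by case: c; case: d => //= -[] /IH ->.
Qed.

Section LeadImage.
Variables (m : bool) (u' u : nat -> bool).
Hypothesis img : is_image (lead m) u' u.
Let ne := lead_nonerasing m.
Local Notation cut := (cut (lead m) u').

Lemma occurs_lead_image y i :
  occurs u (mapw (lead m) y ++ [:: m]) i <-> exists j, i = cut j /\ occurs u' y j.
Proof.
split=> [oi|[j [-> oj]]].
- have [t ht] := mapw_lead_cat_head m y.
  have /(cut_of_start ne img (@lead_start m)) [j hj] : u i = m.
    by move: oi; rewrite ht => /occurs_head.
  exists j; split => //; apply: (occurs_preimage ne img (x := mapw (lead m) y ++ [:: m])).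
  + by rewrite hj.
  + by move=> z; apply: prefix_mapw_lead.
  + by rewrite size_cat /=; have := leq_size_mapw y ne; lia.
- rewrite cats1; apply/occurs_rcons; split; first exact: occurs_image.
  by rewrite -cut_occurs // u_cut // head_lead.
Qed.

Lemma lead_image_next p : u p = ~~ m -> u p.+1 = m.
Proof.
move=> /(cut_of_end ne img (@lead_end m)) [k <-].
by rewrite u_cut // head_lead.
Qed.

Lemma lead_image_prev p : u p = ~~ m -> 0 < p /\ u p.-1 = m.
Proof.
move=> up; have [j hj] := exists_block u' ne p.
have := nth_block img hj; rewrite up => hn.
have lt_p : p - cut j < size (lead m (u' j)) by move: hj; rewrite cutS; lia.
have p_last := lead_end lt_p (esym hn).
have p_first : p - cut j <> 0.
  by move=> e0; move: hn; rewrite e0 /lead; case: eqP => _ /=; case: (m).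
have := size_lead m (u' j) => size_le2.
have -> : p.-1 = cut j by lia.
by rewrite u_cut // head_lead; split => //; lia.
Qed.

Lemma lead_desubst x i : occurs u (m :: x) i ->
  exists y, [/\ factor u' y, reduces_to u (m :: x) u' y &
    m :: x = mapw (lead m) y ++ [:: m] \/ (m :: x = mapw (lead m) y /\ last m x = ~~ m)].
Proof.
move=> oi; have [j hj] := cut_of_start ne img (@lead_start m) (occurs_head oi).
have reduces_of y : (forall i, occurs u (m :: x) i <-> occurs u (mapw (lead m) y ++ [:: m]) i) ->
    exists2 j, occurs u' y j & reduces_to u (m :: x) u' y.
  move=> hocc; have [j' [_ oj']] := proj1 (occurs_lead_image _ _) (proj1 (hocc i) oi).
  exists j' => //; apply: (reduces_image ne img (@mapw_lead_inj m)) => i'.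
  by rewrite hocc occurs_lead_image.
case hl : (last m x == m).
- have ex : m :: x = rcons (belast m x) m by rewrite (lastI m x) (eqP hl).
  have /occurs_rcons[o0 ue] : occurs u (rcons (belast m x) m) i by rewrite -ex.
  have [k hk] := cut_of_start ne img (@lead_start m) ue.
  rewrite -hj in o0; have ey := parse_between_cuts ne img o0 (k := k) ltac:(lia).
  have [|j' oj' red] := reduces_of (window u' j (k - j)).
    by move=> i'; rewrite -ey cats1 -ex.
  by exists (window u' j (k - j)); split; [exists j' | | left; rewrite -ey cats1].
- have hl' : last m x = ~~ m by move: hl; case: (last m x); case: (m).
  have ue := occurs_last oi; rewrite hl' in ue.
  have [k hk] := cut_of_end ne img (@lead_end m) ue.
  rewrite -hj in oi; have ey := parse_between_cuts ne img oi (k := k.+1) ltac:(rewrite hk /=; lia).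
  have [|j' oj' red] := reduces_of (window u' j (k.+1 - j)).
    move=> i'; rewrite -ey cats1; split; last by case/occurs_rcons.
    move=> h; apply/occurs_rcons; split => //=.
    by have := occurs_last h; rewrite hl' addnS => /lead_image_next.
  by exists (window u' j (k.+1 - j)); split; [exists j' | | right].
Qed.

Lemma lead_reduces_same x i : occurs u (m :: x) i ->
  exists y, [/\ factor u' y, reduces_to u (m :: x) u' y & size y < size (m :: x)].
Proof.
move=> /lead_desubst [y [fy red shape]]; exists y; split => //.
case: shape => [e|[e hl]].
- by have := congr1 size e; rewrite size_cat /= size_mapw_lead; lia.
- have : 0 < count_mem (~~ m) (m :: x).
    by rewrite -has_count has_pred1; move: hl => <-; apply: mem_last.
  by have := size_mapw_lead m y; rewrite -e; set c := count_mem _ _; lia.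
Qed.

Lemma lead_reduces_other x i : occurs u (~~ m :: x) i ->
  exists y, [/\ factor u' y, reduces_to u (~~ m :: x) u' y &
    size y < size (~~ m :: x) \/ (x = [::] /\ y = [:: ~~ m])].
Proof.
move=> oi.
have hprev i' : occurs u (~~ m :: x) i' -> 0 < i' /\ u i'.-1 = m.
  by move=> /occurs_head; apply: lead_image_prev.
have [i0 ui0] := hprev i oi.
have /lead_desubst [y [fy red shape]] : occurs u (m :: ~~ m :: x) i.-1.
  by apply/occurs_cons; rewrite prednK.
exists y; split => //; first exact: reduces_to_trans (reduces_extend_left hprev) red.
have nm : ~~ m != m by case: (m).
case: shape => [e|[e hl]].
- have hx : x != [::].
    apply/eqP => x0; move: e; rewrite x0 cats1 => /(congr1 (last false)).
    by rewrite last_rcons /=; case: (m).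
  left; have : 0 < count_mem (~~ m) (mapw (lead m) y).
    have : ~~ m \in mapw (lead m) y ++ [:: m] by rewrite -e !inE eqxx orbT.
    by rewrite mem_cat mem_seq1 (negbTE nm) orbF -has_count has_pred1.
  have := congr1 size e; rewrite size_cat /= size_mapw_lead.
  by set c := count_mem _ _; lia.
- case: x e hl {oi hprev red} => [|c x] e hl.
    by right; split => //; apply: (@mapw_lead_inj m); rewrite -e mapw1 /lead (negbTE nm).
  left; have hpos : 0 < count_mem (~~ m) (c :: x).
    by rewrite -has_count has_pred1; move: hl => /= <-; apply: mem_last.
  by have := size_mapw_lead m y; rewrite -e /=; case: (m) hpos => /=; lia.
Qed.

End LeadImage.

Section PhiAImage.
Variables (u' u : nat -> bool).
Hypothesis img : is_image phi_a u' u.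
Let ne := phi_a_nonerasing.
Local Notation cut := (cut phi_a u').

Lemma occurs_phi_a_image y i :
  occurs u (mapw phi_a (true :: y)) i <-> exists j, i = cut j /\ occurs u' (true :: y) j.
Proof.
split=> [oi|[j [-> oj]]]; last exact: occurs_image.
have [j hj] := cut_of_start ne img phi_a_start (occurs_head oi).
exists j; split => //; apply: (occurs_preimage ne img (x := mapw phi_a (true :: y))).
- by rewrite hj.
- by move=> z; apply: prefix_mapw_phi_a.
- exact: leq_size_mapw.
Qed.

Lemma phi_a_image_next p : u p = true -> u p.+1 = false.
Proof.
move=> up; have [j hj] := cut_of_start ne img phi_a_start up.
have := u_cut ne img j; rewrite hj up; case e: (u' j) => //= _.
by rewrite (@nth_block _ _ _ img j p.+1) ?e ?hj ?subSnn // cutS e /=; lia.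
Qed.

Lemma phi_a_desubst x i : occurs u (true :: x) i ->
  exists y, [/\ factor u' (true :: y), reduces_to u (true :: x) u' (true :: y) &
   (true :: x = mapw phi_a (true :: y) /\ last true x = false) \/
   (rcons (true :: x) false = mapw phi_a (true :: y) /\ last true x = true)].
Proof.
move=> oi; have [j hj] := cut_of_start ne img phi_a_start (occurs_head oi).
set X := if last true x then true :: x else belast true x.
have eX i' : occurs u (true :: x) i' <-> occurs u (rcons X false) i'.
  rewrite /X; case hl: (last true x); last by rewrite -hl -lastI.
  split; last by case/occurs_rcons.
  move=> h; apply/occurs_rcons; split => //=.
  by have := occurs_last h; rewrite hl addnS => /phi_a_image_next.
have oX := proj1 (eX i) oi; have /occurs_rcons [_ ue] := oX.
have [k hk] := cut_of_end ne img phi_a_end ue.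
rewrite -hj in oX.
have ey := parse_between_cuts ne img oX (k := k.+1) ltac:(rewrite hk size_rcons hj; lia).
have [y ey'] : exists y, window u' j (k.+1 - j) = true :: y.
  move: ey; case: (window u' j (k.+1 - j)) => [|[] y] ey.
  - by move: (congr1 size ey); rewrite size_rcons.
  - by exists y.
  - by move: oX; rewrite ey /= => /occurs_head; rewrite hj (occurs_head oi).
rewrite ey' in ey.
have hocc i' : occurs u (true :: x) i' <-> exists j, i' = cut j /\ occurs u' (true :: y) j.
  by rewrite -occurs_phi_a_image -ey.
exists y; split.
- by have [j' [_ ?]] := proj1 (hocc i) oi; exists j'.
- exact: reduces_image ne img mapw_phi_a_inj hocc.
- move: ey; rewrite /X; case hl: (last true x) => ey; [right | left] => //.
  by rewrite -ey -{1}hl -lastI.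
Qed.

Lemma phi_a_reduces x i : occurs u (true :: x) i ->
  exists y, [/\ factor u' y, reduces_to u (true :: x) u' y &
    size y < size (true :: x) \/ (x = [::] /\ y = [:: true])].
Proof.
move=> /phi_a_desubst [y [fy red shape]]; exists (true :: y); split => //.
case: shape => [[e hl]|[e hl]].
- left; have := size_mapw_phi_a (true :: y); rewrite -e /=.
  by case: x hl {e red} => //= c x _; set c' := count_mem _ _; lia.
- case: x e hl {red} => [|c x] e hl.
    by right; split => //; apply: mapw_phi_a_inj; rewrite -e.
  left; have hpos : 0 < count_mem true (c :: x).
    by rewrite -has_count has_pred1; move: hl => /= <-; apply: mem_last.
  have := size_mapw_phi_a (true :: y); rewrite -e -cats1 size_cat count_cat.
  by move: hpos => /=; set n := _ + count_mem true x; lia.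
Qed.

End PhiAImage.

(** * Fixed points of [phi v] *)

Definition is_a (c : sym) := if c is Sa then true else false.
Definition is_b (c : sym) := if c is Sb then true else false.
Definition is_alpha (c : sym) := if c is Salpha then true else false.
Definition is_beta (c : sym) := if c is Sbeta then true else false.
Definition is_b_or_beta (c : sym) := match c with Sb | Sbeta => true | _ => false end.

Lemma phi_cons c v d : phi (c :: v) d = mapw (phi_letter c) (phi v d).
Proof. by []. Qed.

Lemma phi_letter_nonerasing c : nonerasing (phi_letter c).
Proof. by case: c => -[]. Qed.

Lemma phi_nonerasing v : nonerasing (phi v).
Proof.
elim: v => // c v IH d; rewrite phi_cons.
by have := leq_size_mapw (phi v d) (phi_letter_nonerasing c); have := IH d; lia.
Qed.

Lemma phi_rcons v c d : phi (rcons v c) d = mapw (phi v) (phi_letter c d).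
Proof.
have foldr_phi s : foldr (fun x acc => mapw (phi_letter x) acc) s v = mapw (phi v) s.
  elim: v s => [|c' v IH] s /=; last by rewrite IH mapw_comp.
  by elim: s => //= d' s IHs; rewrite mapw_cons -IHs.
by rewrite /phi -cats1 foldr_cat /= -/(mapw _ [:: d]) foldr_phi mapw1.
Qed.

Lemma phi_beta : phi_letter Sbeta = lead true.
Proof. by apply: functional_extensionality => -[]. Qed.

Lemma phi_b : phi_letter Sb = lead false.
Proof. by apply: functional_extensionality => -[]. Qed.

Definition image (g : morph) (u : nat -> bool) : nat -> bool :=
  fun n => nth false (mapw g (pref u n.+1)) n.

Lemma is_image_image g u : nonerasing g -> is_image g u (image g u).
Proof.
move=> ne n; apply: (@eq_from_nth _ false); first by rewrite size_mkseq.
move=> i hi; rewrite nth_mkseq // /image.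
case: (leqP n i.+1) => h.
- by rewrite -(subnKC h) prefD mapw_cat nth_cat hi.
- rewrite -(subnKC (ltnW h)) prefD mapw_cat nth_cat ifT //.
  by have := leq_size_mapw (pref u i.+1) ne; rewrite size_mkseq; lia.
Qed.

Lemma is_image_uniq f u' u1 u2 : nonerasing f -> is_image f u' u1 -> is_image f u' u2 -> u1 = u2.
Proof.
move=> ne img1 img2; apply: functional_extensionality => i.
have := leq_size_mapw (pref u' i.+1) ne; rewrite size_mkseq => lt_i.
have := congr1 (nth false ^~ i) (etrans (esym (img1 i.+1)) (img2 i.+1)).
by rewrite !nth_mkseq.
Qed.

Lemma eq_is_image f g u' u : f =1 g -> is_image f u' u -> is_image g u' u.
Proof. by move=> fg img n; rewrite -!(eq_mapw _ fg); exact: img. Qed.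

Lemma is_image_comp f g u'' u' u : is_image g u'' u' -> is_image f u' u ->
  is_image (fun d => mapw f (g d)) u'' u.
Proof. by move=> img_g img_f n; rewrite -mapw_comp img_g; exact: img_f. Qed.

Lemma is_fixed_cons c v u : is_fixed (phi (c :: v)) u ->
  is_image (phi_letter c) (image (phi v) u) u /\ is_fixed (phi (cyc (c :: v))) (image (phi v) u).
Proof.
move=> fix_u; set u' := image (phi v) u.
have img_v : is_image (phi v) u u' by apply: is_image_image; exact: phi_nonerasing.
have img_c : is_image (phi_letter c) u' u.
  have img := is_image_image u' (phi_letter_nonerasing c).
  suff <- : image (phi_letter c) u' = u by [].
  by apply: (is_image_uniq (phi_nonerasing (c :: v)) _ fix_u); exact: is_image_comp img_v img.
split=> //; rewrite /cyc rot1_cons.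
by apply: (eq_is_image _ (is_image_comp img_c img_v)) => d; rewrite phi_rcons.
Qed.

Lemma mapw_phi_nil s : mapw (phi [::]) s = s.
Proof. by elim: s => //= d s IH; rewrite mapw_cons IH. Qed.


Lemma phi_head_true v d : all is_a_or_beta v -> has is_beta v -> exists t, phi v d = true :: t.
Proof.
elim: v => // c v IH /andP[hc hv] hb; rewrite phi_cons.
case: c hc hb => // _ hb.
- by have [t ->] := IH hv hb; eexists.
- rewrite phi_beta; case: (phi v d) (phi_nonerasing v d) => // e t _.
  by rewrite mapw_cons /lead; case: eqP; eexists.
Qed.

Lemma phi_a_conj s : false :: mapw phi_a s = mapw (lead false) s ++ [:: false].
Proof. by elim: s => //= c s IH; rewrite !mapw_cons -catA -IH; case: c. Qed.

Lemma phi_H_conj v : all is_a_or_beta v -> exists z, phi v true = true :: z /\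
  forall s, mapw (phi (H v)) s ++ z = z ++ mapw (phi v) s.
Proof.
elim: v => [_|c v IH /andP[hc /IH [z [ez conj_z]]]].
  by exists [::]; split => // s; rewrite cats0 mapw_phi_nil.
have mapw_phi_cons c' v' s : mapw (phi (c' :: v')) s = mapw (phi_letter c') (mapw (phi v') s).
  by rewrite mapw_comp.
case: c hc => // _.
- exists (mapw (lead false) z ++ [:: false]); split.
    by rewrite phi_cons ez mapw_cons /= -phi_a_conj.
  move=> s; rewrite /= !mapw_phi_cons phi_b catA -mapw_cat conj_z mapw_cat -catA.
  by rewrite -phi_a_conj -catA.
- exists (mapw (lead true) z); split; first by rewrite phi_cons ez phi_beta mapw_cons.
  by move=> s; rewrite /= !mapw_phi_cons phi_beta -!mapw_cat conj_z.
Qed.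

Lemma is_fixed_shift v u : all is_a_or_beta v -> has is_beta v -> is_fixed (phi v) u ->
  u 0 = true /\ is_fixed (phi (H v)) (shift u).
Proof.
move=> hv hb fix_u.
have u0 : u 0 = true.
  have := fix_u 1; rewrite /pref /= mapw1; have [t ->] := phi_head_true (u 0) hv hb.
  by case.
split=> // n; have [z [ez conj_z]] := phi_H_conj hv.
have := fix_u n.+1; rewrite prefS mapw_cons u0 ez.
set L := size _; rewrite /= -conj_z.
case: L => [|L] //=; rewrite prefS => -[] _ e.
have := congr1 (take (size (mapw (phi (H v)) (pref (shift u) n)))) e.
by rewrite take_size_cat // => ->; rewrite -map_take take_iota size_map size_iota.
Qed.

(** * Primitivity and derivation in the family *)

Definition admissible (v : seq sym) := has is_beta v /\
  ((all is_a_or_beta v /\ has is_a v) \/ (all is_b_or_beta v /\ has is_b v)).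

Lemma all_rot (T : Type) (a : pred T) n s : all a (rot n s) = all a s.
Proof. by rewrite /rot all_cat andbC -all_cat cat_take_drop. Qed.

Lemma all_iter_cyc (a : pred sym) k x : all a (iter k cyc x) = all a x.
Proof. by elim: k => //= k IH; rewrite /cyc all_rot IH. Qed.

Lemma has_iter_cyc (a : pred sym) k x : has a (iter k cyc x) = has a x.
Proof. by elim: k => //= k IH; rewrite /cyc has_rot IH. Qed.

Lemma H_iter_cyc k x : H (iter k cyc x) = iter k cyc (H x).
Proof. by elim: k => //= k IH; rewrite /cyc /H map_rot -IH. Qed.

Lemma H_idem x : H (H x) = H x.
Proof. by rewrite /H -map_comp; apply: eq_map => -[]. Qed.

Lemma admissible_Cset w v : all is_a_or_beta w -> has is_a w -> has is_beta w ->
  Cset w v \/ Cset (H w) v -> admissible v.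
Proof.
move=> hw ha hb [] [k ->]; rewrite /admissible !has_iter_cyc !all_iter_cyc.
  by split; [|left].
split; first by rewrite /H has_map; apply: sub_has hb => -[].
right; rewrite /H all_map has_map.
by split; [apply: sub_all hw | apply: sub_has ha] => -[].
Qed.

Definition fixes (d : bool) (c : sym) := phi_letter c d == [:: d].

Lemma phi_full_or_fixed v d :
  (true \in phi v d /\ false \in phi v d) \/ (phi v d = [:: d] /\ all (fixes d) v).
Proof.
elim: v => [|c v [[h1 h2]|[e hv]]]; first by right.
- have [b b_in full_b] :
      exists2 b, b \in phi v d & true \in phi_letter c b /\ false \in phi_letter c b.
    by case: c; [exists true | exists true | exists false | exists false].
  by left; rewrite phi_cons; split; apply/flatten_mapP; exists b => //; case: full_b.
- rewrite phi_cons e mapw1 /= /fixes hv andbT.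
  by case: c; case: (d); [left | right | left | right | right | left | right | left].
Qed.

Lemma admissible_full v d : admissible v -> true \in phi v d /\ false \in phi v d.
Proof.
move=> [hb hab]; case: (phi_full_or_fixed v d) => // -[_ hfix]; exfalso.
case: d hfix => hfix.
- by case: hab => -[_]; apply/negP; rewrite -all_predC; apply: sub_all hfix => -[].
- by move: hb; apply/negP; rewrite -all_predC; apply: sub_all hfix => -[].
Qed.

Lemma admissible_primitive v : admissible v -> primitive (phi v).
Proof.
by move=> hv; exists 1 => c d; rewrite /mpow /= mapw1; case: (admissible_full c hv); case: d.
Qed.

Lemma head_mapw f s : nonerasing f ->
  head false (mapw f s) = head false (f (head false s)) \/ s = [::].
Proof. by case: s => [|c s] ne; [right | left; rewrite mapw_cons; case: (f c) (ne c)]. Qed.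

(* Each [phi_letter c] acts on first letters as the identity or a constant,
   hence so does [phi v]. *)
Lemma head_phi v : (forall d, head false (phi v d) = d) \/
  (exists e, forall d, head false (phi v d) = e).
Proof.
elim: v => [|c v IH]; first by left.
have hd d : head false (phi (c :: v) d) = head false (phi_letter c (head false (phi v d))).
  rewrite phi_cons; case: (head_mapw (phi v d) (phi_letter_nonerasing c)) => // e.
  by have := phi_nonerasing v d; rewrite e.
have head_id : (forall d, head false (phi (c :: v) d) = head false (phi v d)) ->
    (forall d, head false (phi (c :: v) d) = d) \/
    (exists e, forall d, head false (phi (c :: v) d) = e).
  by move=> hd'; case: IH => [h|[e h]]; [left | right; exists e] => d; rewrite hd' h.
case: c hd head_id => hd head_id.
- by apply: head_id => d; rewrite hd; case: (head false (phi v d)).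
- by right; exists false => d; rewrite hd; case: (head false (phi v d)).
- by apply: head_id => d; rewrite hd; case: (head false (phi v d)).
- by right; exists true => d; rewrite hd; case: (head false (phi v d)).
Qed.

Lemma mpow_grow f c x : nonerasing f -> f c = c :: x -> x <> [::] ->
  forall n, exists t, mpow f n c = c :: t /\ n < size (mpow f n c).
Proof.
move=> ne fc x_nil; elim=> [|n [t [e lt_n]]]; first by exists [::].
rewrite /mpow iterS -/(mpow f n) e mapw_cons fc; exists (x ++ mapw f t); split => //.
have := leq_size_mapw t ne; move: lt_n; rewrite e /= size_cat.
by case: (x) x_nil => //= *; lia.
Qed.

Lemma admissible_substitution v : admissible v -> substitution (phi v).
Proof.
move=> hv; set c := head false (phi v true).
have hc : head false (phi v c) = c by case: (head_phi v) => [h|[e h]]; rewrite /c !h.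
have size2 : 1 < size (phi v c).
  have [] := admissible_full c hv.
  by case: (phi v c) => [|? [|? ?]] //=; rewrite !inE => /eqP <- /eqP.
move: hc size2; case E: (phi v c) => [|c' [|x0 x]] //= hc _; rewrite hc in E.
exists c, (x0 :: x); split => // N; exists N => n le_N.
by have [t [_ lt_n]] := mpow_grow (phi_nonerasing v) E (fun e => ltac:(discriminate e)) n; lia.
Qed.

Lemma phi_all_fixes v d : all (fixes d) v -> phi v d = [:: d].
Proof. by elim: v => // c v IH /andP[/eqP hc /IH hv]; rewrite phi_cons hv mapw1. Qed.

Lemma mpow_fixed f d : f d = [:: d] -> forall n, mpow f n d = [:: d].
Proof. by move=> fd; elim=> // n IH; rewrite /mpow iterS -/(mpow f n) IH mapw1. Qed.

Lemma primitive_has w : all is_a_or_beta w -> primitive (phi w) -> has is_a w /\ has is_beta w.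
Proof.
move=> hw [n hn]; split; apply/negPn/negP => hn'.
- have : all (fixes true) w.
    by elim: w hw hn' {hn} => //= -[] w IH //= /andP[_ /IH h] /h.
  by move=> /phi_all_fixes /mpow_fixed /(_ n) e; have := hn true false; rewrite e.
- have : all (fixes false) w.
    by elim: w hw hn' {hn} => //= -[] w IH //= /andP[_ /IH h] /h.
  by move=> /phi_all_fixes /mpow_fixed /(_ n) e; have := hn false true; rewrite e.
Qed.

Lemma factor_letter v u b : admissible v -> is_fixed (phi v) u -> factor u [:: b].
Proof.
move=> hv fix_u; have := fix_u 1; rewrite /pref /= mapw1 => e.
have : b \in phi v (u 0) by have [] := admissible_full (u 0) hv; case: (b).
rewrite e => b_in; exists (index b (mkseq u (size (phi v (u 0))))) => -[|//] _ /=.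
by rewrite addn0 -{2}(nth_index false b_in) nth_mkseq // -{2}(size_mkseq u (size _)) index_mem.
Qed.

(* [shortens b c] holds when desubstituting [phi_c] shortens every occurrence
   of the one-letter factor [b]. *)
Definition shortens (b : bool) (c : sym) := if b then is_beta c else ~~ is_beta c.

Lemma elementary_step c u' u b x i : ~~ is_alpha c -> ~~ (is_a c && ~~ b) ->
  is_image (phi_letter c) u' u -> occurs u (b :: x) i ->
  exists y, [/\ factor u' y, reduces_to u (b :: x) u' y &
    size y < size (b :: x) \/ [/\ x = [::], y = [:: b] & ~~ shortens b c]].
Proof.
case: c => // _ hab img oi.
- case: b hab oi => // _ oi; have [y [fy red shape]] := phi_a_reduces img oi.
  by exists y; split => //; case: shape => [|[-> ->]]; [left | right].
- rewrite phi_b in img; case: b hab oi => _ oi.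
  + have [y [fy red shape]] := lead_reduces_other img oi.
    by exists y; split => //; case: shape => [|[-> ->]]; [left | right].
  + by have [y [fy red lt_y]] := lead_reduces_same img oi; exists y; split => //; left.
- rewrite phi_beta in img; case: b hab oi => _ oi.
  + by have [y [fy red lt_y]] := lead_reduces_same img oi; exists y; split => //; left.
  + have [y [fy red shape]] := lead_reduces_other img oi.
    by exists y; split => //; case: shape => [|[-> ->]]; [left | right].
Qed.

Lemma find_cyc (T : Type) (a : pred T) x0 v : has a v -> ~~ a (head x0 v) ->
  find a v = (find a (cyc v)).+1.
Proof.
case: v => //= c v /orP[-> //|hv] /negbTE ->.
by rewrite /cyc rot1_cons -cats1 find_cat hv.
Qed.

Section Derivation.
Variable w : seq sym.
Hypotheses (hw : all is_a_or_beta w) (ha : has is_a w) (hb : has is_beta w).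

Definition family (v : seq sym) := Cset w v \/ Cset (H w) v.

Definition derived_in_family (u : nat -> bool) (x : seq bool) :=
  exists v', family v' /\ derived_fixed_by u x (phi v').

Lemma family_cyc v : family v -> family (cyc v).
Proof. by case=> -[k ->]; [left | right]; exists k.+1. Qed.

Lemma family_H v : family v -> family (H v).
Proof. by case=> -[k ->]; right; exists k; rewrite H_iter_cyc ?H_idem. Qed.

Lemma family_admissible v : family v -> admissible v.
Proof. exact: admissible_Cset. Qed.

Lemma family_has_shortens b v : family v -> has (shortens b) v.
Proof.
move=> /family_admissible [hbeta hab]; case: b => //.
by case: hab => -[_]; apply: sub_has => -[].
Qed.

Lemma derived_in_family_reduces u x u' y :
  derived_in_family u' y -> reduces_to u x u' y -> derived_in_family u x.
Proof. by move=> [v' [hv red]] /(_ _ red); exists v'. Qed.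

Lemma derived_in_family_nil v u : family v -> is_fixed (phi v) u -> derived_in_family u [::].
Proof.
move=> hv fix_u; exists v; split => //; apply: derived_nil.
by apply/is_fixedP => //; exact: phi_nonerasing.
Qed.

Lemma family_decomp v u : family v -> is_fixed (phi v) u -> exists c v',
  [/\ v = c :: v', ~~ is_alpha c, is_image (phi_letter c) (image (phi v') u) u,
      is_fixed (phi (cyc v)) (image (phi v') u) & family (cyc v)].
Proof.
move=> hv fix_u; have [_ hab] := family_admissible hv.
case: v hv fix_u hab => [|c v'] hv fix_u hab; first by case: hab => -[].
have [img fix_u'] := is_fixed_cons fix_u; exists c, v'; split => //; last exact: family_cyc.
by case: hab => -[/andP[hc _] _]; move: hc; rewrite /is_alpha; case: (c).
Qed.

(* [phi_a] does not synchronize on [0]: drop the first letter of [u] and use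
   the conjugate word [H v], which starts with [b]. *)
Lemma family_step_shift v' u x i : family (Sa :: v') -> is_fixed (phi (Sa :: v')) u ->
  occurs u (false :: x) i -> exists v'' u' y,
  [/\ family v'', is_fixed (phi v'') u', factor u' y, reduces_to u (false :: x) u' y &
      size y < size (false :: x)].
Proof.
move=> hv fix_u oi.
have [[hall _]|[/andP[//]]] := (family_admissible hv).2.
have [u0 fix_su] := is_fixed_shift hall (family_admissible hv).1 fix_u.
have [c [v2 [[<- _] _ img fix_u' hv2]]] := family_decomp (family_H hv) fix_su.
rewrite phi_b in img.
have nocc0 : ~ occurs u (false :: x) 0 by move/occurs_head; rewrite u0.
have oi' : occurs (shift u) (false :: x) i.-1.
  case: i oi => [/nocc0 //|i] oi j hj; rewrite /shift /= -addSn; exact: oi.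
have [y [fy red lt_y]] := lead_reduces_same img oi'.
exists (cyc (H (Sa :: v'))), (image (phi v2) (shift u)), y; split => //.
exact: reduces_to_trans (reduces_shift nocc0) red.
Qed.

Lemma family_step v u b x i : family v -> is_fixed (phi v) u -> occurs u (b :: x) i ->
  exists v' u' y, [/\ family v', is_fixed (phi v') u', factor u' y, reduces_to u (b :: x) u' y &
    size y < size (b :: x) \/ [/\ x = [::], y = [:: b], v' = cyc v & ~~ shortens b (head Sa v)]].
Proof.
move=> hv fix_u oi.
have [c [v' [ev c_alpha img fix_u' hv']]] := family_decomp hv fix_u.
case ab : (is_a c && ~~ b).
- case: c ab ev {c_alpha img} => //; case: b oi => // oi _ ev; subst v.
  have [v'' [u' [y [hv'' fix_u'' fy red lt_y]]]] := family_step_shift hv fix_u oi.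
  by exists v'', u', y; split => //; left.
- have [y [fy red shape]] := elementary_step c_alpha (negbT ab) img oi.
  exists (cyc v), (image (phi v') u), y; split => //.
  by case: shape => [lt_y|[-> -> nsh]]; [left | right; rewrite ev].
Qed.

Lemma derived_in_family_letter b k v u : family v -> find (shortens b) v = k ->
  is_fixed (phi v) u -> derived_in_family u [:: b].
Proof.
elim: k v u => [|k IH] v u hv hk fix_u.
all: have [i oi] := factor_letter b (family_admissible hv) fix_u.
all: have [v' [u' [[|c y] [hv' fix_u' _ red shape]]]] := family_step hv fix_u oi.
1,3: exact: derived_in_family_reduces (derived_in_family_nil hv' fix_u') red.
all: case: shape => [//|[_ [-> ->] ev' nsh]] in red *.
all: have := find_cyc (family_has_shortens b hv) nsh; rewrite hk => // -[hk'].
by apply: derived_in_family_reduces red; apply: IH hv' _ fix_u'; rewrite ev'.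
Qed.

Lemma derived_in_family_factor n x v u : size x <= n -> family v -> is_fixed (phi v) u ->
  factor u x -> derived_in_family u x.
Proof.
elim: n x v u => [|n IH] [|b x] v u //= le_x hv fix_u [i oi].
1,2: exact: derived_in_family_nil hv fix_u.
have [v' [u' [y [hv' fix_u' fy red [lt_y|[-> _ _ _]]]]]] := family_step hv fix_u oi.
- by apply: derived_in_family_reduces red; apply: IH hv' fix_u' fy; move: lt_y le_x => /=; lia.
- exact: derived_in_family_letter hv erefl fix_u.
Qed.

End Derivation.

Theorem claim28 (w : seq sym) :
  all is_a_or_beta w ->
  primitive (phi w) ->
  closed_under_derivation (fun v => Cset w v \/ Cset (H w) v).
Proof.
move=> hw hp; have [ha hb] := primitive_has hw hp; split.
- move=> v /(admissible_Cset hw ha hb) adm.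
  by split; [exact: admissible_primitive | exact: admissible_substitution].
- move=> v hv u fix_u x fx.
  have fix_u' : is_fixed (phi v) u by apply/is_fixedP => //; exact: phi_nonerasing.
  exact: (derived_in_family_factor hw ha hb (leqnn (size x)) hv fix_u' fx).
Qed.
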